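(* Let $g:\{0,1\}^N\to\{0,1\}$ be a total Boolean function and $S\ge2$. Any deterministic AMPC algorithm with I/O capacity $S$ that computes $g$ requires at least $\frac12\log_S\deg(g)$ rounds. Any randomized AMPC algorithm with I/O capacity $S$ that computes $g$ with error at most $1/3$ requires at least $\frac12\log_S\widetilde{\deg}(g)$ rounds.
   Context: AMPC model with I/O capacity $S$: computation proceeds in rounds communicating through distributed data stores (DDS) $\mathcal{D}_0,\dots,\mathcal{D}_R$, each storing under each key a multiset of values (possibly empty; duplicates allowed, each value written by a unique machine). On input $x\in\{0,1\}^N$, $\mathcal{D}_0$ consists of the pairs $(i,x_i)$. In round $r\ge1$ each machine (arbitrarily many, computationally unbounded, deterministic) adaptively queries keys of $\mathcal{D}_{r-1}$, receiving the whole multiset under the key, with later queries depending arbitrarily on earlier ones and their responses; the total number of values in responses plus the number of empty-response queries is at most $S$; it then writes at most $S$ key-value pairs to $\mathcal{D}_r$ as a function of its queries and responses. In every round, on every input, at most $S$ values are written under any single key (a machine exceeding its budget stops and writes nothing). A deterministic algorithm computes $g$ in $R$ rounds if for every input $x$, $\mathcal{D}_R$ contains exactly the pair $(\textsc{answer},g(x))$. A randomized AMPC algorithm is a probability distribution over deterministic ones, its round count is the maximum over the support, and it computes $g$ with error at most $\delta$ if on each input it outputs $g(x)$ with probability at least $1-\delta$. $\deg(g)$ is the degree of the unique multilinear polynomial equal to $g$ on $\{0,1\}^N$; $\widetilde{\deg}(g)$ is the minimum degree of a real polynomial $p$ with $|p(x)-g(x)|\le1/3$ for all $x\in\{0,1\}^N$.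 *)

From Stdlib Require Import Reals.
From HB Require Import structures.
From mathcomp Require Import all_boot all_order all_algebra.
From mathcomp Require Import all_classical all_reals all_analysis.
From mathcomp Require Import Rstruct Rstruct_topology.
From mathcomp Require mpoly.

Set Implicit Arguments.
Unset Strict Implicit.
Unset Printing Implicit Defensive.
Import Order.TTheory GRing.Theory Num.Theory.
Local Open Scope classical_set_scope.
Local Open Scope ring_scope.

(* Keys and values are natural numbers (any finite object can be
   encoded).  A DDS is a finite multiset of key-value pairs, represented
   by a list (only its multiset content is ever observed by machines). *)

Definition key := nat.
Definition value := nat.
Definition dds := seq (key * value).

Definition answer_key : key := 0%N.

(** Querying a key returns the whole multiset of values stored under it;
    the multiset is presented canonically as a sorted list, so that no
    information beyond the multiset is revealed. *)
Definition response (D : dds) (k : key) : seq value :=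
  sort leq [seq kv.2 | kv <- D & kv.1 == k].

Definition history := seq (key * seq value).

(** A deterministic machine (computationally unbounded): an adaptive
    query strategy ([None] = stop querying) and an output function; both
    are arbitrary functions of the queries and responses seen so far. *)
Record machine := Machine {
  m_query : history -> option key;
  m_write : history -> seq (key * value) }.

Definition qcost (r : seq value) : nat := maxn 1 (size r).

(** Run the query phase of machine [M] on [D] with budget [S]:
    [Some h] is the final history, [None] means the machine exceeded its
    budget (and hence writes nothing).  Every query costs at least one
    unit, so [fuel] = S never runs out before the budget does. *)
Fixpoint run_queries (S : nat) (M : machine) (D : dds)
    (fuel : nat) (h : history) (cost : nat) : option history :=
  match m_query M h with
  | None => Some h
  | Some k =>
      let r := response D k in
      let cost' := (cost + qcost r)%N in
      if (S < cost')%N then None else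
      match fuel with
      | 0 => None
      | f.+1 => run_queries S M D f (rcons h (k, r)) cost'
      end
  end.

Definition machine_output (S : nat) (M : machine) (D : dds) : seq (key * value) :=
  match run_queries S M D S [::] 0 with
  | None => [::]
  | Some h => let w := m_write M h in if (size w <= S)%N then w else [::]
  end.

Definition round := seq machine.

(** Each stored value occurrence is written by a unique machine: a machine
    writing the same pair several times contributes it once. *)
Definition run_round (S : nat) (rd : round) (D : dds) : dds :=
  flatten [seq undup (machine_output S M D) | M <- rd].

Definition algorithm := seq round.

Definition dds0 (N : nat) (x : 'I_N -> bool) : dds :=
  [seq (nat_of_ord i, nat_of_bool (x i)) | i <- enum 'I_N].

Fixpoint run_from (S : nat) (A : algorithm) (D : dds) : seq dds :=
  match A with
  | [::] => [:: D]
  | rd :: A' => D :: run_from S A' (run_round S rd D)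
  end.

Definition all_dds (S N : nat) (A : algorithm) (x : 'I_N -> bool) : seq dds :=
  run_from S A (dds0 x).

Definition final_dds (S N : nat) (A : algorithm) (x : 'I_N -> bool) : dds :=
  last (dds0 x) (all_dds S A x).

Definition valid_alg (S N : nat) (A : algorithm) : Prop :=
  forall (x : 'I_N -> bool) (D : dds), D \in behead (all_dds S A x) ->
    forall k : key, (count (fun kv : key * value => kv.1 == k) D <= S)%N.

Definition outputs (S N : nat) (A : algorithm) (x : 'I_N -> bool) (b : bool) : Prop :=
  final_dds S A x = [:: (answer_key, nat_of_bool b)].

Definition det_computes (S N : nat) (A : algorithm) (g : ('I_N -> bool) -> bool) : Prop :=
  valid_alg S N A /\ forall x, outputs S A x (g x).

(** Randomized AMPC algorithm with at most R rounds computing g with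
    error at most delta: a probability distribution P over (a measurable
    space Omega indexing) deterministic valid algorithms, each with at most
    R rounds, such that on every input x the event "outputs g(x)" is
    measurable and has probability at least 1 - delta. *)
Definition rand_computes (S N : nat) (dO : measure_display) (Omega : measurableType dO)
    (P : probability Omega R) (A : Omega -> algorithm) (Rounds : nat)
    (g : ('I_N -> bool) -> bool) (delta : R) : Prop :=
  (forall w, valid_alg S N (A w) /\ (size (A w) <= Rounds)%N) /\
  forall x : 'I_N -> bool,
    measurable [set w | outputs S (A w) x (g x)] /\
    ((1 - delta)%:E <= P [set w | outputs S (A w) x (g x)])%E.

Definition rpoly (N : nat) := mpoly.mpoly N R.

Definition pdeg (N : nat) (p : rpoly N) : nat :=
  foldr maxn 0%N [seq mpoly.mdeg m | m <- mpoly.msupp p].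

Definition peval01 (N : nat) (p : rpoly N) (x : 'I_N -> bool) : R :=
  mpoly.meval (fun i => (nat_of_bool (x i))%:R) p.

Definition multilinear (N : nat) (p : rpoly N) : Prop :=
  forall m, mpoly.mcoeff m p <> 0 -> forall i : 'I_N, (mpoly.fun_of_multinom m i <= 1)%N.

Definition represents (N : nat) (p : rpoly N) (g : ('I_N -> bool) -> bool) : Prop :=
  forall x, peval01 p x = (nat_of_bool (g x))%:R.

(** deg(g): the degree of the (unique) multilinear polynomial equal to g
    on {0,1}^N (the default 0 is never used: such a polynomial exists). *)
Definition bdeg (N : nat) (g : ('I_N -> bool) -> bool) : nat :=
  match pselect (exists p : rpoly N, multilinear p /\ represents p g) with
  | left h => pdeg (projT1 (cid h))
  | right _ => 0%N
  end.

Definition approximates (N : nat) (p : rpoly N) (g : ('I_N -> bool) -> bool) : Prop :=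
  forall x, `|peval01 p x - (nat_of_bool (g x))%:R| <= 3^-1.

(** approximate degree: minimum degree of a real polynomial approximating
    g within 1/3 on {0,1}^N (default 0 is never used). *)
Definition adeg (N : nat) (g : ('I_N -> bool) -> bool) : nat :=
  match pselect (exists d : nat, `[< exists p : rpoly N, approximates p g /\ pdeg p = d >]) with
  | left h => ex_minn h
  | right _ => 0%N
  end.

(** (1/2) log_S d, as a real number (Stdlib's ln, with ln 0 = 0). *)
Definition half_log (S d : nat) : R :=
  Rmult (Rinv (INR 2)) (Rdiv (ln (INR d)) (ln (INR S))).

(* A function of the input x in {0,1}^N has degree <= e if it agrees on the cube with a real
   polynomial of total degree <= e.  For D_0 = {(i, x_i)}, the indicator of each possible response
   to a query has degree <= 1.  If this holds with degree e for D_r, then every step of a machine's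
   query phase branches on a response, so after its at most S queries each pair it writes is an
   indicator of degree <= S e.  A response of D_(r+1) is determined by the set of pairs
   (machine, value) written under the queried key; that set has at most S elements, so by
   inclusion-exclusion its indicators are combinations of products of at most S of the degree-(S e)
   pair indicators, of degree <= S^2 e.  After R rounds the answer indicator, which equals g, has
   degree <= S^(2R); as the multilinear representation of g has the least degree among the
   polynomials agreeing with g on the cube, deg(g) <= S^(2R).
   For a randomized algorithm, group the deterministic algorithms by the set of inputs on which they
   answer correctly; the mixture of one representative per group, weighted by the probability of the
   group, has degree <= S^(2R) and is within 1/3 of g on every input, so deg~(g) <= S^(2R). *)

From Stdlib Require Import Reals.
From HB Require Import structures.
From mathcomp Require Import all_boot all_order all_algebra.
From mathcomp Require Import all_classical all_reals all_analysis.
From mathcomp Require Import Rstruct Rstruct_topology.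
From mathcomp Require mpoly.
Import (canonicals, coercions, hints) mpoly.
From mathcomp Require Import ring lra zify.

Set Implicit Arguments.
Unset Strict Implicit.
Unset Printing Implicit Defensive.
Import Order.TTheory GRing.Theory Num.Theory.
Local Open Scope ring_scope.

Local Notation ind b := ((nat_of_bool b)%:R : R).

Section LowDegree.
Variable N : nat.
Local Notation cube := ('I_N -> bool).

Definition mdeg_bounded (D : nat) (p : rpoly N) :=
  {in mpoly.msupp p, forall m, mpoly.mdeg m <= D}%N.

Definition lowdeg (D : nat) (f : cube -> R) :=
  exists2 p : rpoly N, mdeg_bounded D p & forall x, peval01 p x = f x.

Lemma lowdeg_mono D D' f : (D <= D')%N -> lowdeg D f -> lowdeg D' f.
Proof. by move=> DD' [p hp ep]; exists p => // m /hp /leq_trans; apply. Qed.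

Lemma lowdeg_const D c : lowdeg D (fun _ => c).
Proof.
exists (mpoly.mpolyC N c) => [m|x]; last by rewrite /peval01 mpoly.mevalC.
by rewrite mpoly.msuppC; case: (c == 0) => //; rewrite inE => /eqP ->; rewrite mpoly.mdeg0.
Qed.

Lemma lowdeg_add D f g : lowdeg D f -> lowdeg D g -> lowdeg D (fun x => f x + g x).
Proof.
move=> [p hp ep] [q hq eq]; exists (p + q) => [m /mpoly.msuppD_le|x].
  by rewrite mem_cat => /orP [/hp|/hq].
by rewrite /peval01 mpoly.mevalD -/(peval01 p x) -/(peval01 q x) ep eq.
Qed.

Lemma lowdeg_mul D1 D2 f g :
  lowdeg D1 f -> lowdeg D2 g -> lowdeg (D1 + D2) (fun x => f x * g x).
Proof.
move=> [p hp ep] [q hq eq]; exists (p * q) => [m|x].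
  move=> /mpoly.msuppM_le /allpairsP [[m1 m2] [/= h1 h2 ->]].
  by rewrite mpoly.mdegD leq_add ?hp ?hq.
by rewrite /peval01 mpoly.mevalM -/(peval01 p x) -/(peval01 q x) ep eq.
Qed.

Lemma lowdeg_scale D c f : lowdeg D f -> lowdeg D (fun x => c * f x).
Proof. by rewrite -{2}[D]add0n; apply: lowdeg_mul; apply: lowdeg_const. Qed.

Lemma lowdeg_sub D f g : lowdeg D f -> lowdeg D g -> lowdeg D (fun x => f x - g x).
Proof.
move=> hf hg; apply: lowdeg_add hf _.
by under eq_fun do rewrite -mulN1r; apply: lowdeg_scale.
Qed.

Lemma lowdeg_sum D (I : Type) (r : seq I) (P : pred I) (F : I -> cube -> R) :
  (forall i, P i -> lowdeg D (F i)) -> lowdeg D (fun x => \sum_(i <- r | P i) F i x).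
Proof.
move=> hF; elim: r => [|i r IH].
  by under eq_fun do rewrite big_nil; apply: lowdeg_const.
under eq_fun do rewrite big_cons.
by case Pi: (P i); [apply: lowdeg_add (hF _ Pi) IH | apply: IH].
Qed.

Lemma lowdeg_prod d (I : Type) (r : seq I) (P : pred I) (F : I -> cube -> R) :
  (forall i, P i -> lowdeg d (F i)) ->
  lowdeg (count P r * d) (fun x => \prod_(i <- r | P i) F i x).
Proof.
move=> hF; elim: r => [|i r IH].
  by under eq_fun do rewrite big_nil; apply: lowdeg_const.
under eq_fun do rewrite big_cons.
rewrite /=; case Pi: (P i); last exact: IH.
by rewrite add1n mulSn; apply: lowdeg_mul (hF _ Pi) IH.
Qed.

Lemma lowdeg_coord (i : 'I_N) (F : bool -> R) : lowdeg 1 (fun x => F (x i)).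
Proof.
have -> : (fun x : cube => F (x i)) = (fun x => F false + (F true - F false) * ind (x i)).
  by apply: funext => x; case: (x i); rewrite /= ?mulr1 ?mulr0 ?addr0 // addrC subrK.
apply/lowdeg_add/lowdeg_scale; first exact: lowdeg_const.
exists (mpoly.mpolyX R (mpoly.mnm1 i)) => [m|x].
  by rewrite mpoly.msuppX inE => /eqP ->; rewrite mpoly.mdeg1.
rewrite /peval01 mpoly.mevalX (bigD1 i) //= mpoly.mnm1E eqxx expr1 big1 ?mulr1 //.
by move=> j /negbTE ji; rewrite mpoly.mnm1E eq_sym ji expr0.
Qed.

End LowDegree.

Lemma prod_ind (I : finType) (P : pred I) : \prod_i ind (P i) = ind [forall i, P i].
Proof.
have [hP|/forallPn [i nPi]] := boolP [forall i, P i].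
  by rewrite big1 // => i _; rewrite (forallP hP i).
by rewrite (bigD1 i) //= (negbTE nPi) mul0r.
Qed.

Section Mobius.
Variable N : nat.

Definition mnm_supp (m : mpoly.multinom N) : {set 'I_N} := [set i | m i != 0%N].

Definition point_of_set (y : {set 'I_N}) : 'I_N -> bool := fun i => i \in y.

(* [mobius_weight T y] is [(-1) ^ #|T :\: y|] if [y \subset T] and [0] otherwise. *)
Definition mobius_weight (T y : {set 'I_N}) : R :=
  \prod_i (if i \in y then ind (i \in T) else if i \in T then -1 else 1).

Lemma card_mnm_supp_le (m : mpoly.multinom N) : (#|mnm_supp m| <= mpoly.mdeg m)%N.
Proof.
rewrite mpoly.mdegE -sum1_card big_mkcond /=; apply: leq_sum => i _.
by rewrite inE; case: (m i).
Qed.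

Lemma card_mnm_supp_le1 (m : mpoly.multinom N) :
  (forall i, m i <= 1)%N -> #|mnm_supp m| = mpoly.mdeg m.
Proof.
move=> m1; rewrite mpoly.mdegE -sum1_card big_mkcond /=; apply: eq_bigr => i _.
by rewrite inE; have := m1 i; case: (m i) => [|[]].
Qed.

Lemma mnm_supp_inj_le1 (m m' : mpoly.multinom N) :
  (forall i, m i <= 1)%N -> (forall i, m' i <= 1)%N ->
  mnm_supp m = mnm_supp m' -> m = m'.
Proof.
move=> m1 m'1 /setP eqS; apply/mpoly.mnmP => i; have := eqS i; rewrite !inE.
by have := m1 i; have := m'1 i; case: (m i) => [|[]]; case: (m' i) => [|[]].
Qed.

(* Inverting the zeta transform on the subcube below [T] isolates the monomials whose
   support is exactly [T]. *)
Lemma mobius_peval01 (T : {set 'I_N}) (r : rpoly N) :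
  \sum_y mobius_weight T y * peval01 r (point_of_set y) =
  \sum_(m <- mpoly.msupp r) mpoly.mcoeff m r * ind (mnm_supp m == T).
Proof.
under eq_bigr do rewrite /peval01 mpoly.mevalE big_distrr /=.
rewrite exchange_big /=; apply: eq_bigr => m _.
under eq_bigr do rewrite mulrCA.
rewrite -big_distrr /=; congr (_ * _).
have -> : ind (mnm_supp m == T) =
    \prod_i (ind (i \in T) + (if i \in T then -1 else 1) * ind (m i == 0%N)).
  have -> : (mnm_supp m == T) = [forall i, (m i != 0%N) == (i \in T)].
    apply/eqP/forallP => [<- i|eqS]; first by rewrite inE.
    by apply/setP => i; rewrite inE (eqP (eqS i)).
  rewrite -prod_ind; apply: eq_bigr => i _.
  by case: (i \in T); case: (m i == 0%N); rewrite /= ?mulr1 ?mulr0 ?addr0 ?subrr ?add0r.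
under eq_bigr do rewrite -big_split /=.
rewrite bigA_distr; apply: eq_bigr => y _; apply: eq_bigr => i _.
rewrite /point_of_set; case: (i \in y) => /=; first by rewrite expr1n mulr1.
by rewrite expr0n.
Qed.

(* Mobius inversion at the support [T] of a monomial [m0] of [p] of degree [> D] gives
   [mcoeff m0 p] on the side of [p], and [0] on the side of [q], whose monomials with support
   [T] have degree [>= #|T| = mdeg m0 > D]. *)
Lemma mdeg_bounded_multilinear (p q : rpoly N) D : multilinear p -> mdeg_bounded D q ->
  (forall x, peval01 p x = peval01 q x) -> mdeg_bounded D p.
Proof.
move=> ml hq epq m0 m0p; rewrite leqNgt; apply/negP => Dm0.
have mlp m : m \in mpoly.msupp p -> forall i, (m i <= 1)%N.
  by rewrite mpoly.mcoeff_msupp => /eqP; apply: ml.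
set T := mnm_supp m0.
have sum_p : \sum_(m <- mpoly.msupp p) mpoly.mcoeff m p * ind (mnm_supp m == T) =
    mpoly.mcoeff m0 p.
  rewrite (bigD1_seq m0) ?mpoly.msupp_uniq //= eqxx mulr1 big1_seq ?addr0 //.
  move=> m /andP [mm0 mp]; case: eqP => [eqS|]; last by rewrite mulr0.
  by rewrite (mnm_supp_inj_le1 (mlp m mp) (mlp m0 m0p) eqS) eqxx in mm0.
have sum_q : \sum_(m <- mpoly.msupp q) mpoly.mcoeff m q * ind (mnm_supp m == T) = 0.
  rewrite big1_seq // => m /andP [_ mq]; case: eqP => [eqS|]; last by rewrite mulr0.
  have := hq m mq; have := card_mnm_supp_le m.
  by rewrite eqS /T (card_mnm_supp_le1 (mlp m0 m0p)) => h1 h2; exfalso; lia.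
move: m0p; rewrite mpoly.mcoeff_msupp -sum_p -mobius_peval01.
under eq_bigr do rewrite epq.
by rewrite mobius_peval01 sum_q eqxx.
Qed.

End Mobius.

Lemma pdeg_leq N D (p : rpoly N) : mdeg_bounded D p -> (pdeg p <= D)%N.
Proof.
move=> /allP; rewrite /pdeg; elim: (mpoly.msupp p) => //= m s IH /andP [mD sD].
by rewrite geq_max mD IH.
Qed.

Lemma bdeg_leq N D (g : ('I_N -> bool) -> bool) :
  lowdeg D (fun x => ind (g x)) -> (bdeg g <= D)%N.
Proof.
move=> [q hq eq]; rewrite /bdeg; case: pselect => // h.
case: (cid h) => p [ml rep] /=; apply/pdeg_leq/(mdeg_bounded_multilinear ml hq) => x.
by rewrite rep eq.
Qed.

Lemma adeg_leq N D (g : ('I_N -> bool) -> bool) (q : rpoly N) :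
  mdeg_bounded D q -> approximates q g -> (adeg g <= D)%N.
Proof.
move=> hq ap; rewrite /adeg; case: pselect => // h.
case: ex_minnP => n _ hmin; apply: leq_trans (hmin (pdeg q) _) (pdeg_leq hq).
by apply/asboolP; exists q.
Qed.

Lemma half_log_leq S d R0 : (2 <= S)%N -> (d <= S ^ (2 * R0))%N ->
  Rle (half_log S d) (INR R0).
Proof.
move=> HS hd; apply/RleP; rewrite /half_log RmultE RdivE RinvE !INRE.
have lnS : (0 : R) < ln S%:R by apply: ln_gt0; rewrite ltr1n.
case: d hd => [|d] hd; first by rewrite ln0 // mul0r mulr0 ler0n.
have : ln d.+1%:R / ln S%:R <= (2 * R0)%N%:R :> R.
  rewrite ler_pdivrMr // mulr_natl -lnXn ?(ltr0n _ S) ?(leq_trans _ HS) //.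
  by rewrite -natrX ler_ln ?posrE ?ltr0n ?ler_nat ?expn_gt0 ?(leq_trans _ HS).
rewrite natrM; lra.
Qed.

Lemma ind_set_eqE (I : finType) (A Z : {set I}) :
  ind (A == Z) = \prod_(i in Z) ind (i \in A) - \sum_(W : {set I} | Z \proper W) ind (A == W).
Proof.
have -> : \prod_(i in Z) ind (i \in A) = ind (Z \subset A).
  have [/fintype.subsetP ZA | /fintype.subsetPn [i iZ iA]] := boolP (Z \subset A).
    by rewrite big1 // => i /ZA ->.
  by rewrite (bigD1 i) //= (negbTE iA) mul0r.
have -> : ind (Z \subset A) = \sum_(W : {set I} | Z \subset W) ind (A == W).
  have [ZA | ZA] := boolP (Z \subset A).
    rewrite (bigD1 A) //= eqxx big1 ?addr0 // => W /andP [_ /negbTE].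
    by rewrite eq_sym => ->.
  by rewrite big1 // => W ZW; case: eqP => // AW; rewrite AW ZW in ZA.
rewrite (bigD1 Z) //=; under eq_bigl do rewrite andbC eq_sym -finset.properEneq.
by rewrite addrK.
Qed.

Section Composition.
Variable N : nat.
Local Notation cube := ('I_N -> bool).

(* By inclusion-exclusion, [[set i | y i x] == Z] is an alternating sum of the products
   [\prod_(i in W) y i x] over [Z \subset W], and the terms with [#|W| > S] vanish. *)
Lemma lowdeg_set_eq (I : finType) (S d : nat) (y : I -> cube -> bool) :
  (forall i, lowdeg d (fun x => ind (y i x))) ->
  (forall x, #|[set i | y i x]| <= S)%N ->
  forall Z : {set I}, lowdeg (S * d) (fun x => ind ([set i | y i x] == Z)).
Proof.
move=> hy hS Z; set A := fun x => [set i | y i x].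
have large (W : {set I}) : (S < #|W|)%N -> lowdeg (S * d) (fun x => ind (A x == W)).
  move=> SW; have -> : (fun x => ind (A x == W)) = (fun _ => ind false).
    by apply: funext => x; case: eqP => // AW; have := hS x; rewrite -/(A x) AW leqNgt SW.
  exact: lowdeg_const.
have [k] := ubnP (S - #|Z|); elim: k => // k IH in Z *; rewrite ltnS => SZk.
have [SZ|ZS] := ltnP S #|Z|; first exact: large.
rewrite (funext (fun x => ind_set_eqE (A x) Z)).
apply: lowdeg_sub.
  have hA i : lowdeg d (fun x => ind (i \in A x)) by under eq_fun do rewrite inE.
  apply: lowdeg_mono _ (lowdeg_prod _ (fun i _ => hA i)).
  rewrite (_ : count _ _ = #|Z|) ?leq_mul2r ?ZS ?orbT //.
  by rewrite cardE -size_filter /enum_mem unlock.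
apply: lowdeg_sum => W ZW; have [SW|WS] := ltnP S #|W|; first exact: large.
by apply: IH; have := proper_card ZW; lia.
Qed.

Lemma finfun_cube (x : cube) : fun_of_fin (finfun x) = x.
Proof. exact/funext/ffunE. Qed.

Lemma cube_bounded (F : cube -> seq nat) : exists B, forall x v, v \in F x -> (v < B)%N.
Proof.
exists (\max_(f : {ffun 'I_N -> bool}) \max_(v <- F f) v).+1 => x v vF; rewrite ltnS.
by apply: leq_trans (leq_bigmax (finfun x)); rewrite finfun_cube; apply: leq_bigmax_seq.
Qed.

(* The cube is finite, so [F] takes finitely many values and [G (F x) x] is a finite sum of
   products [ind (F x == t) * G t x]. *)
Lemma lowdeg_comp (T : eqType) (F : cube -> T) (G : T -> cube -> R) d1 d2 :
  (forall t, lowdeg d1 (fun x => ind (F x == t))) -> (forall t, lowdeg d2 (G t)) ->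
  lowdeg (d1 + d2) (fun x => G (F x) x).
Proof.
move=> hF hG; pose range := undup (codom (fun f : {ffun 'I_N -> bool} => F f)).
have -> : (fun x => G (F x) x) = (fun x => \sum_(t <- range) ind (F x == t) * G t x).
  apply: funext => x; have Fx : F x \in range.
    by rewrite mem_undup; apply/codomP; exists (finfun x); rewrite finfun_cube.
  rewrite (bigD1_seq (F x)) ?undup_uniq //= eqxx mul1r big1 ?addr0 // => t.
  by rewrite eq_sym => /negbTE ->; rewrite mul0r.
by apply: lowdeg_sum => t _; apply: lowdeg_mul.
Qed.

End Composition.

Lemma perm_flatten_active n B (w : 'I_n -> seq nat) :
  (forall j, uniq (w j)) -> (forall j v, v \in w j -> (v < B)%N) ->
  perm_eq (flatten [seq w j | j <- enum 'I_n])
    [seq val jv.2 | jv <- enum [set jv : 'I_n * 'I_B | val jv.2 \in w jv.1]].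
Proof.
move=> wu wB; apply/allP => v _ /=; apply/eqP.
transitivity (\sum_(j < n) (v \in w j))%N.
  by rewrite count_flatten sumnE !big_map; apply: eq_bigr => j _; apply: count_uniq_mem.
transitivity (\sum_(j < n) \sum_(l < B) ((val l \in w j) && (val l == v)))%N.
  apply: eq_bigr => j _; have [vw|vNw] := boolP (v \in w j).
    rewrite (bigD1 (Ordinal (wB j v vw))) //= vw eqxx big1 // => l.
    by rewrite -val_eqE /= => /negbTE ->; rewrite andbF.
  by rewrite big1 // => l _; case: eqP => [->|]; rewrite ?(negbTE vNw) ?andbF.
rewrite count_map -sum1_count big_enum_cond pair_big /=.
rewrite [RHS]big_mkcond; apply: eq_bigr => -[j l] _.
by rewrite inE; case: (_ \in _); case: (_ == _).
Qed.

Section Simulation.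
Variables N S : nat.
Local Notation cube := ('I_N -> bool).

Definition dds_lowdeg (e : nat) (D : cube -> dds) :=
  forall k L, lowdeg e (fun x => ind (response (D x) k == L)).

Lemma lowdeg_response e D k (phi : seq value -> R) :
  dds_lowdeg e D -> lowdeg e (fun x => phi (response (D x) k)).
Proof.
move=> hD; rewrite -[e]addn0.
by apply: (lowdeg_comp (G := fun t _ => phi t) (hD k)) => t; apply: lowdeg_const.
Qed.

Lemma lowdeg_run_queries e D M fuel h c (phi : option history -> R) :
  dds_lowdeg e D -> lowdeg (fuel * e) (fun x => phi (run_queries S M (D x) fuel h c)).
Proof.
move=> hD; elim: fuel h c => [|fuel IH] h c /=.
  case: (m_query M h) => [k|]; last exact: lowdeg_const.
  by under eq_fun do rewrite if_same; apply: lowdeg_const.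
case: (m_query M h) => [k|]; last exact: lowdeg_const.
rewrite mulSn; pose G L x := phi (if (S < c + qcost L)%N then None
  else run_queries S M (D x) fuel (rcons h (k, L)) (c + qcost L)).
apply: (lowdeg_comp (G := G) (hD k)) => L.
by rewrite {}/G; case: (S < c + qcost L)%N; [apply: lowdeg_const | apply: IH].
Qed.

Lemma lowdeg_machine_output e D M (phi : seq (key * value) -> R) :
  dds_lowdeg e D -> lowdeg (S * e) (fun x => phi (machine_output S M (D x))).
Proof.
move=> hD; rewrite /machine_output.
exact: (lowdeg_run_queries M S [::] 0 (fun o => phi (if o is Some h then
  (let w := m_write M h in if (size w <= S)%N then w else [::]) else [::])) hD).
Qed.

Lemma response_run_round rd D k : response (run_round S rd D) k =
  sort leq (flatten
    [seq [seq kv.2 | kv <- undup (machine_output S M D) & kv.1 == k] | M <- rd]).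
Proof. by rewrite /response /run_round filter_flatten map_flatten -!map_comp. Qed.

(* A response after the round is determined by the set of active pairs (machine, value) written
   under the queried key; by the query phase each activity indicator has degree [S * e], and the
   capacity bound leaves at most [S] active pairs. *)
Lemma dds_lowdeg_run_round e D rd : dds_lowdeg e D ->
  (forall x k, count (fun kv : key * value => kv.1 == k) (run_round S rd (D x)) <= S)%N ->
  dds_lowdeg (S * (S * e)) (fun x => run_round S rd (D x)).
Proof.
move=> hD hv k L; pose n := size rd; pose M j := tnth (in_tuple rd) j.
pose w (j : 'I_n) x := [seq kv.2 | kv <- undup (machine_output S (M j) (D x)) & kv.1 == k].
have wu j x : uniq (w j x).
  rewrite map_inj_in_uniq ?filter_uniq ?undup_uniq // => -[k1 v1] [k2 v2].
  by rewrite !mem_filter /= => /andP [/eqP -> _] /andP [/eqP -> _] ->.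
have [B wB] := cube_bounded (fun x => flatten [seq w j x | j <- enum 'I_n]).
pose act x := [set jv : 'I_n * 'I_B | val jv.2 \in w jv.1 x].
have resp x : response (run_round S rd (D x)) k = sort leq [seq val jv.2 | jv <- enum (act x)].
  have rdE : rd = [seq M j | j <- enum 'I_n] by rewrite map_tnth_enum.
  rewrite response_run_round [in X in flatten X]rdE -map_comp.
  apply/(perm_sortP leq_total leq_trans anti_leq)/perm_flatten_active => [j|j v vw].
    exact: wu.
  by apply: (wB x); apply/flatten_mapP; exists j; rewrite ?mem_enum.
have act_le x : (#|act x| <= S)%N.
  have := congr1 size (resp x).
  by rewrite !size_sort !size_map size_filter -cardE => <-; apply: hv.
have hact (jv : 'I_n * 'I_B) : lowdeg (S * e) (fun x => ind (val jv.2 \in w jv.1 x)).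
  exact: (lowdeg_machine_output (M jv.1) (fun o => ind (val jv.2 \in
    [seq kv.2 | kv <- undup o & kv.1 == k])) hD).
rewrite -[(S * (S * e))%N]addn0 (funext (fun x => congr1 (fun r => ind (r == L)) (resp x))).
apply: (lowdeg_comp (F := act) (G := fun Z _ => ind (sort leq [seq val jv.2 | jv <- enum Z] == L))
  (lowdeg_set_eq hact act_le)) => Z.
exact: lowdeg_const.
Qed.

End Simulation.

Section Rounds.
Variables N S : nat.
Local Notation cube := ('I_N -> bool).

Lemma response_dds0 (x : cube) k :
  response (dds0 x) k = if insub k is Some i then [:: nat_of_bool (x i)] else [::].
Proof.
rewrite /response /dds0 filter_map -map_comp; case: insubP => [i _ <-|kN] /=.
  rewrite (@eq_filter _ _ (pred1 i)) => [|j]; last by rewrite /= val_eqE.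
  by rewrite filter_pred1_uniq ?enum_uniq ?mem_enum.
rewrite (@eq_filter _ _ pred0) ?filter_pred0 // => j /=.
by apply/negP => /eqP jk; rewrite -jk ltn_ord in kN.
Qed.

Lemma dds_lowdeg_dds0 : dds_lowdeg 1 (@dds0 N).
Proof.
move=> k L; under eq_fun do rewrite response_dds0.
case: insubP => [i _ _|_]; last exact: lowdeg_const.
exact: (lowdeg_coord i (fun b => ind ([:: nat_of_bool b] == L))).
Qed.

Lemma last_run_from z A D : last z (run_from S A D) = last D (run_from S A D).
Proof. by case: A. Qed.

Lemma dds_lowdeg_run_from A : forall (D : cube -> dds) e, dds_lowdeg e D ->
  (forall x D', D' \in behead (run_from S A (D x)) ->
     forall k, count (fun kv : key * value => kv.1 == k) D' <= S)%N ->
  dds_lowdeg (S ^ (2 * size A) * e) (fun x => last (D x) (run_from S A (D x))).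
Proof.
elim: A => [|rd A IH] D e hD hv /=; first by rewrite mul1n.
have hv1 x k : (count (fun kv : key * value => kv.1 == k) (run_round S rd (D x)) <= S)%N.
  by apply: (hv x); case: (A) => [|? ?]; apply: mem_head.
have eE : (S ^ (2 * size (rd :: A)) * e = S ^ (2 * size A) * (S * (S * e)))%N.
  by rewrite /= mulnS expnD; ring.
rewrite eE; under eq_fun do rewrite last_run_from.
exact: IH _ _ (dds_lowdeg_run_round hD hv1) (fun x D' hD' => hv x D' (mem_behead hD')).
Qed.

Definition answer_ind (A : algorithm) (x : cube) : R :=
  ind (response (final_dds S A x) answer_key == [:: 1%N]).

Lemma lowdeg_answer_ind A : valid_alg S N A -> lowdeg (S ^ (2 * size A)) (answer_ind A).
Proof.
move=> hv; rewrite -[(S ^ _)%N]muln1.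
exact: (lowdeg_response answer_key (fun r => ind (r == [:: 1%N]))
  (dds_lowdeg_run_from dds_lowdeg_dds0 hv)).
Qed.

Lemma answer_ind_outputs A x b : outputs S A x b -> answer_ind A x = ind b.
Proof. by rewrite /answer_ind => ->; case: b. Qed.

End Rounds.

Lemma mixture_approx (I : finType) (p a : I -> R) (good : pred I) (b : bool) (delta : R) :
  (forall i, 0 <= p i) -> \sum_i p i = 1 -> (forall i, 0 <= a i <= 1) ->
  (forall i, good i -> p i != 0 -> a i = ind b) -> 1 - delta <= \sum_(i | good i) p i ->
  `|\sum_i p i * a i - ind b| <= delta.
Proof.
move=> p0 p1 a01 ga pg.
rewrite (bigID good) /= (eq_bigr (fun i => p i * ind b)); last first.
  by move=> i gi; have [->|/(ga i gi) ->] := eqVneq (p i) 0; rewrite ?mul0r.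
rewrite -big_distrl /=; move: p1 pg; rewrite (bigID good) /=.
set s := \sum_(i | good i) p i; set t := \sum_(i | ~~ good i) p i => p1 pg.
set u := \sum_(i | ~~ good i) p i * a i.
have u0 : 0 <= u.
  by apply: sumr_ge0 => i _; apply: mulr_ge0 (p0 i) _; case/andP: (a01 i).
have ut : u <= t.
  apply: ler_sum => i _; rewrite -[leRHS]mulr1.
  by apply: ler_wpM2l; [apply: p0 | case/andP: (a01 i)].
by rewrite ler_norml; case: b {ga} => /=; rewrite ?mulr1 ?mulr0; apply/andP; split; lra.
Qed.

Section Atoms.
Local Open Scope classical_set_scope.
Context d (T : measurableType d).

Lemma measure_bigsetU_uniq (mu : {measure set T -> \bar R}) (J : choiceType) (r : seq J)
    (Q : pred J) (F : J -> set T) :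
  uniq r -> (forall i, measurable (F i)) -> trivIset setT F ->
  mu (\big[setU/set0]_(i <- r | Q i) F i) = (\sum_(i <- r | Q i) mu (F i))%E.
Proof.
move=> + mF tF; elim: r => [|i r IH] /=; first by rewrite !big_nil measure0.
case/andP => ir /IH {}IH; rewrite !big_cons; case: ifP => // Qi.
rewrite measureU //; first by congr (_ + _); exact: IH.
  exact: bigsetU_measurable.
rewrite -bigcup_seq_cond setI_bigcupr; apply: bigcup0 => j /andP [jr _].
apply/seteqP; split => // w Fijw; have ij := tF i j I I (ex_intro _ w Fijw).
by rewrite ij jr in ir.
Qed.

Variables (X : finType) (E : X -> set T).
Hypothesis mE : forall f, measurable (E f).

Definition pattern (w : T) : {ffun X -> bool} := [ffun f => `[< E f w >]].

Definition atom (c : {ffun X -> bool}) : set T := [set w | pattern w = c].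

Lemma atom_measurable c : measurable (atom c).
Proof.
have -> : atom c = \big[setI/setT]_f (if c f then E f else ~` E f).
  rewrite -bigcap_seq; apply/seteqP; split => w /=.
    by move=> <- f _; rewrite ffunE; case: asboolP.
  move=> h; apply/ffunP => f; rewrite ffunE; have := h f (mem_index_enum f).
  by case: (c f); case: asboolP.
by apply: bigsetI_measurable => f _; case: (c f); [apply: mE | apply/measurableC/mE].
Qed.

Lemma measure_pattern (mu : {measure set T -> \bar R}) (Q : pred {ffun X -> bool}) :
  mu [set w | Q (pattern w)] = (\sum_(c | Q c) mu (atom c))%E.
Proof.
rewrite -measure_bigsetU_uniq ?index_enum_uniq //; last first.
  - by move=> c c' _ _ [w /= [<- <-]].
  - exact: atom_measurable.
rewrite -bigcup_seq_cond; congr (mu _); apply/seteqP; split => w /=.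
  by move=> Qw; exists (pattern w) => //=; rewrite mem_index_enum.
by move=> [c /andP [_ Qc] /= ->].
Qed.

End Atoms.

Section Randomized.
Local Open Scope classical_set_scope.
Variables (N S : nat) (g : ('I_N -> bool) -> bool) (dO : measure_display).
Variables (Omega : measurableType dO) (P : probability Omega R) (A : Omega -> algorithm).
Variables (Rounds : nat) (delta : R).
Hypothesis S_gt0 : (0 < S)%N.
Hypothesis hA : rand_computes S P A Rounds g delta.

Let E (f : {ffun 'I_N -> bool}) := [set w | outputs S (A w) f (g f)].

Let E_measurable f : measurable (E f).
Proof. by have [_ /(_ f) []] := hA. Qed.

Let weight c := fine (P (atom E c)).

Let weight_ge0 c : 0 <= weight c.
Proof. exact/fine_ge0/measure_ge0. Qed.

Let sum_weight Q : ((\sum_(c | Q c) weight c)%:E = P [set w | Q (pattern E w)])%E.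
Proof.
rewrite measure_pattern // -sumEFin; apply: eq_bigr => c _.
by rewrite fineK // fin_num_measure //; apply: atom_measurable.
Qed.

Let sum_weight_all : \sum_c weight c = 1.
Proof.
have := sum_weight xpredT; rewrite (_ : [set w | xpredT (pattern E w)] = setT).
  by rewrite probability_setT => -[].
by apply/seteqP.
Qed.

Let sum_weight_correct f : 1 - delta <= \sum_(c : {ffun _ -> bool} | c f) weight c.
Proof.
rewrite -lee_fin sum_weight (_ : [set w | _] = E f); first by have [_ /(_ f) []] := hA.
by apply/seteqP; split => w /=; rewrite ffunE => /asboolP.
Qed.

(* A representative algorithm of each atom; an empty atom has weight 0, so the empty algorithm
   serves as a placeholder. *)
Let alg c : algorithm :=
  if pselect (exists w, atom E c w) is left h then A (projT1 (cid h)) else [::].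

Let alg_valid c : valid_alg S N (alg c) /\ (size (alg c) <= Rounds)%N.
Proof. by rewrite /alg; case: pselect => [h|_]; [have [] := hA | split]. Qed.

Let alg_outputs (c : {ffun {ffun 'I_N -> bool} -> bool}) f :
  c f -> weight c != 0 -> outputs S (alg c) f (g f).
Proof.
rewrite /alg; case: pselect => [h|nh] cf; last first.
  rewrite /weight (_ : atom E c = set0) ?measure0 ?eqxx //.
  by apply/seteqP; split => // w cw; apply: nh; exists w.
case: (cid h) => w /= pw _; move: cf; rewrite -pw ffunE.
by move/asboolP.
Qed.

Lemma rand_lowdeg_approx : exists2 q : rpoly N,
  mdeg_bounded (S ^ (2 * Rounds)) q & forall x, `|peval01 q x - ind (g x)| <= delta.
Proof.
pose mix (x : 'I_N -> bool) := \sum_c weight c * answer_ind S (alg c) x.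
have [q hq eq] : lowdeg (S ^ (2 * Rounds)) mix.
  apply: lowdeg_sum => c _; apply: lowdeg_scale; have [hv hs] := alg_valid c.
  by apply: lowdeg_mono _ (lowdeg_answer_ind hv); rewrite leq_pexp2l ?leq_mul2l ?hs ?orbT.
exists q => // x; rewrite eq /mix -{2}(finfun_cube x).
apply: (mixture_approx (a := fun c => answer_ind S (alg c) x) (good := fun c => c (finfun x)))
  => // [c|c cx wc].
  by rewrite /answer_ind; case: (_ == _); rewrite /= ?lexx ?ler01.
by apply: answer_ind_outputs; rewrite -{1}(finfun_cube x); apply: alg_outputs.
Qed.

End Randomized.

Theorem corollary4p1 (N S : nat) (g : ('I_N -> bool) -> bool) (HS : (2 <= S)%N) :
  (forall A : algorithm, det_computes S A g -> Rle (half_log S (bdeg g)) (INR (size A)))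
  /\
  (forall (dO : measure_display) (Omega : measurableType dO)
          (P : probability Omega R) (A : Omega -> algorithm) (Rounds : nat),
      rand_computes S P A Rounds g (Rinv (INR 3)) ->
      Rle (half_log S (adeg g)) (INR Rounds)).
Proof.
have S_gt0 : (0 < S)%N by apply: leq_trans HS.
split=> [A [hv ho] | dO Omega P A Rounds hA].
  apply/(half_log_leq HS)/bdeg_leq.
  by under eq_fun do rewrite -(answer_ind_outputs (ho _)); apply: lowdeg_answer_ind.
have [q hq approx] := rand_lowdeg_approx S_gt0 hA.
apply/(half_log_leq HS)/(adeg_leq hq) => x.
by have := approx x; rewrite RinvE INRE.
Qed.
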